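(* Let $\mathcal{G}=(\mathcal{V},\mathcal{E})$ be an unweighted finite simple graph and $f:\mathcal{V}\to\mathbb{R}$ a filtering function. Let $u\in\mathcal{V}$ be dominated by $v\in\mathcal{V}$ with $f(u)\leq f(v)$. Then for every $k\ge 0$, the $k$-th persistence diagrams of the superlevel filtrations of $\mathcal{G}$ and of $\mathcal{G}-\{u\}$ (with $f$ restricted and the same thresholds) coincide: $PD^{\mathrm{v}}_k(\mathcal{G},f)=PD^{\mathrm{v}}_k(\mathcal{G}-\{u\},f)$. In particular, if $f$ is the degree function of $\mathcal{G}$, this holds for every dominated vertex $u$.
   Context: $N(w)$ is the closed neighborhood of $w$; $u$ is dominated by $v\ne u$ if $N(u)\subset N(v)$. $\mathcal{G}-\{u\}$ deletes $u$ and its incident edges. With thresholds $\alpha_0<\dots<\alpha_m$ spanning the range of $f$, the superlevel filtration consists of the clique (flag) complexes of the subgraphs induced by $\{w: f(w)\ge\alpha_i\}$, ordered by decreasing $\alpha_i$; $PD^{\mathrm{v}}_k$ is the $k$-th persistence diagram (field coefficients) of this filtration. *)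

From mathcomp Require Import all_boot all_order all_algebra.
Set Implicit Arguments. Unset Strict Implicit. Unset Printing Implicit Defensive.
Import Order.TTheory GRing.Theory Num.Theory.
Local Open Scope ring_scope.

(* A finite simple graph: vertex type V (a finType) and a symmetric,
   irreflexive adjacency relation e. Subgraphs induced on a vertex set
   S : {set V} are handled by keeping the ambient type V. *)

Definition closed_nbhd (V : finType) (e : rel V) (w : V) : {set V} :=
  [set x | (x == w) || e w x].

Definition dominated (V : finType) (e : rel V) (u v : V) : Prop :=
  v != u /\ closed_nbhd e u \subset closed_nbhd e v.

Definition degree_fun (R : numDomainType) (V : finType) (e : rel V) : V -> R :=
  fun w => (#|[set x | e w x]|)%:R.

Definition is_clique (V : finType) (e : rel V) (s : {set V}) : bool :=
  [forall x in s, forall y in s, (x != y) ==> e x y].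

Definition simplex (V : finType) (e : rel V) (S : {set V}) (k : nat)
    (s : {set V}) : bool :=
  [&& s \subset S, #|s| == k.+1 & is_clique e s].

(* Chains: row vectors indexed by all subsets of V (via enum_rank);
   C_k(K) is the row space spanned by the basis vectors of k-simplices. *)
Definition chains (F : fieldType) (V : finType) (e : rel V) (S : {set V})
    (k : nat) : 'M[F]_#|{set V}| :=
  (\sum_(s | simplex e S k s) <<@delta_mx F 1 #|{set V}| ord0 (enum_rank s)>>)%MS.

(* coefficient of the face t in the (ordered, via enum_rank) boundary of s:
   d[v_0..v_k] = sum_i (-1)^i [v_0..^v_i..v_k], non-augmented *)
Definition bdry_coef (F : fieldType) (V : finType) (s t : {set V}) : F :=
  \sum_(v in s)
     if (t == s :\ v) && (t != set0)
     then (-1) ^+ #|[set w in t | (enum_rank w < enum_rank v)%N]|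
     else 0.

(* boundary operator acting on row vectors: c |-> c *m bdry_mx *)
Definition bdry_mx (F : fieldType) (V : finType) : 'M[F]_#|{set V}| :=
  \matrix_(i, j) bdry_coef F (enum_val i) (enum_val j).

Definition cycles (F : fieldType) (V : finType) (e : rel V) (S : {set V})
    (k : nat) : 'M[F]_#|{set V}| :=
  (chains F e S k :&: kermx (bdry_mx F V))%MS.

Definition boundaries (F : fieldType) (V : finType) (e : rel V) (S : {set V})
    (k : nat) : 'M[F]_#|{set V}| :=
  (chains F e S k.+1 *m bdry_mx F V)%MS.

Definition level (R : numDomainType) (V : finType) (W : {set V}) (f : V -> R)
    (alpha : R) : {set V} :=
  [set w in W | alpha <= f w].

(* i-th step of the superlevel filtration (i = 0..m), thresholds
   a 0 < ... < a m taken in decreasing order *)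
Definition filt (R : numDomainType) (V : finType) (W : {set V}) (f : V -> R)
    (m : nat) (a : nat -> R) (i : nat) : {set V} :=
  level W f (a (m - i)%N).

(* persistent Betti numbers: rank of H_k(K_i) -> H_k(K_j), i <= j <= m,
   = dim((Z_k(K_i) + B_k(K_j)) / B_k(K_j)); 0 outside this range *)
Definition pbetti (F : fieldType) (R : numDomainType) (V : finType) (e : rel V)
    (W : {set V}) (f : V -> R) (m : nat) (a : nat -> R) (k i j : nat) : nat :=
  if (i <= j <= m)%N then
    (\rank (cycles F e (filt W f m a i) k + boundaries F e (filt W f m a j) k)%MS
     - \rank (boundaries F e (filt W f m a j) k))%N
  else 0%N.

(* k-th persistence diagram, as the multiplicity function of points
   (birth index i, death index j), 0 <= i < j <= m+1, j = m+1 meaning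
   "never dies" (infinity):
   mu^{i,j} = b^{i,j-1} - b^{i,j} - b^{i-1,j-1} + b^{i-1,j}. *)
Definition PD (F : fieldType) (R : numDomainType) (V : finType) (e : rel V)
    (W : {set V}) (f : V -> R) (m : nat) (a : nat -> R) (k : nat)
    : nat -> nat -> int :=
  fun i j =>
  let b := pbetti F e W f m a k in
  if (i < j <= m.+1)%N then
    ((b i j.-1)%:Z - (b i j)%:Z)
    - (if i is i'.+1 then (b i' j.-1)%:Z - (b i' j)%:Z else 0)
  else 0.

From mathcomp Require Import all_boot all_order all_algebra.
From mathcomp Require Import ring zify.
From Stdlib Require Import FunctionalExtensionality.
Set Implicit Arguments. Unset Strict Implicit. Unset Printing Implicit Defensive.
Import Order.TTheory GRing.Theory Num.Theory.
Local Open Scope ring_scope.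

(* If N[u] is contained in N[v], then adding v to a clique containing u gives
   again a clique, so "coning off towards v" is an operator H of degree +1 on
   the chains of every complex containing v whenever it contains u.  The chain
   map R = 1 - H d - d H is chain homotopic to the identity, kills every
   simplex containing u and fixes every chain avoiding u.  Since f u <= f v,
   every superlevel set containing u also contains v, so R retracts each
   step of the filtration onto the same step with u deleted, compatibly with
   the inclusions; hence all persistent Betti numbers, and therefore the
   persistence diagrams, agree. *)

Lemma signr_swap_cancel (R : comRingType) (b1 b2 : bool) (a b : nat) : (b1 + b2 = 1)%N ->
  (-1) ^+ (b1 + a) * (-1) ^+ b + (-1) ^+ (b2 + b) * (-1) ^+ a = 0 :> R.
Proof. by case: b1; case: b2 => //= _; rewrite ?add0n ?add1n !exprS; ring. Qed.

Lemma signr_pair_cancel (R : comRingType) (b1 b2 : bool) (a b : nat) : (b1 + b2 = 1)%N ->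
  (-1) ^+ (b1 + a) * (-1) ^+ (b2 + b) + (-1) ^+ b * (-1) ^+ a = 0 :> R.
Proof. by case: b1; case: b2 => //= _; rewrite ?add0n ?add1n !exprS; ring. Qed.

Lemma ltn_enum_rank_sum (V : finType) (x y : V) : x != y ->
  ((enum_rank x < enum_rank y)%N + (enum_rank y < enum_rank x)%N = 1)%N.
Proof.
move=> nxy; have : (nat_of_ord (enum_rank x) != enum_rank y).
  by apply: contra nxy => /eqP/val_inj/enum_rank_inj ->.
by case: (ltngtP (enum_rank x) (enum_rank y)).
Qed.

Lemma sum_antisym (M : nmodType) (V : finType) (s : {set V}) (G : V -> V -> M) :
  (forall x y, x \in s -> y \in s -> x != y -> G x y + G y x = 0) ->
  \sum_(x in s) \sum_(y in s :\ x) G x y = 0.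
Proof.
move=> HG.
have split_pairs x : x \in s -> \sum_(y in s :\ x) G x y =
   \sum_(y in s | (enum_rank y < enum_rank x)%N) G x y +
   \sum_(y in s | (enum_rank x < enum_rank y)%N) G x y.
  move=> xs; rewrite (bigID (fun y => (enum_rank y < enum_rank x)%N)) /=.
  congr (_ + _); apply: eq_bigl => y; rewrite !inE.
    by case: (eqVneq y x) => [->|_]; rewrite ?ltnn ?andbF ?andbT.
  case: (eqVneq y x) => [->|nyx]; first by rewrite ltnn !andbF.
  case: (y \in s); rewrite /= ?andbF //; have := ltn_enum_rank_sum nyx.
  by case: (enum_rank y < enum_rank x)%N; case: (enum_rank x < enum_rank y)%N.
rewrite (eq_bigr _ split_pairs) big_split /=.
rewrite [X in _ + X](exchange_big_dep (fun y => y \in s)); last by move=> ? ? ? /andP[].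
rewrite [X in _ + X](eq_bigr (fun j =>
  \sum_(i in s | (enum_rank i < enum_rank j)%N) G i j)); last first.
  by move=> j js; apply: eq_bigl => i; rewrite js.
rewrite -big_split /= big1 // => x xs.
rewrite -big_split /= big1 // => y /andP[ys lt].
by apply: HG => //; apply: contraTneq lt => ->; rewrite ltnn.
Qed.

Section Boundary.

Variables (F : fieldType) (V : finType).

Definition rank_below (t : {set V}) (x : V) : nat :=
  #|[set w in t | (enum_rank w < enum_rank x)%N]|.

Definition face_sign (t : {set V}) (x : V) : F := (-1) ^+ rank_below t x.

Lemma bdry_coefE (s t : {set V}) : bdry_coef F s t =
  \sum_(x in s) if (t == s :\ x) && (t != set0) then face_sign t x else 0.
Proof. by []. Qed.

Lemma rank_belowD1 (t : {set V}) (y z : V) : y \in t ->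
  rank_below t z = ((enum_rank y < enum_rank z)%N + rank_below (t :\ y) z)%N.
Proof.
move=> yt; rewrite /rank_below (cardsD1 y) !inE yt /=; congr (_ + _)%N.
by apply: eq_card => w; rewrite !inE andbA.
Qed.

Lemma face_sign_sqr (t : {set V}) (x : V) : face_sign t x * face_sign t x = 1.
Proof. by rewrite /face_sign -exprD -signr_odd addnn odd_double. Qed.

Lemma bdry_coef_sum (s : {set V}) (g : {set V} -> F) :
  \sum_(t : {set V}) bdry_coef F s t * g t =
  \sum_(x in s) (if s :\ x != set0 then face_sign (s :\ x) x * g (s :\ x) else 0).
Proof.
rewrite /bdry_coef; under eq_bigr do rewrite mulr_suml.
rewrite exchange_big; apply: eq_bigr => x _.
rewrite (bigD1 (s :\ x)) //= eqxx /= big1 ?addr0; last first.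
  by move=> t /negbTE ->; rewrite mul0r.
by case: ifP => _; rewrite ?mul0r.
Qed.

Lemma bdry_coef_neq0 (s t : {set V}) :
  bdry_coef F s t != 0 -> exists2 x, x \in s & t = s :\ x.
Proof.
rewrite /bdry_coef => nz.
case: (pickP (fun x => (x \in s) && (t == s :\ x))) => [x /andP[xs /eqP]|H].
  by exists x.
move: nz; rewrite big1 ?eqxx // => x xs; case: ifP => // /andP[ht _].
by move: (H x); rewrite xs ht.
Qed.

Lemma bdry_coef_bdry (s r : {set V}) :
  \sum_(t : {set V}) bdry_coef F s t * bdry_coef F t r = 0.
Proof.
rewrite bdry_coef_sum.
pose G x y := if (r == s :\ x :\ y) && (r != set0)
              then face_sign (s :\ x) x * face_sign r y else 0.
rewrite (eq_bigr (fun x => \sum_(y in s :\ x) G x y)); last first.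
  move=> x xs; case: ifP => [_|/negbFE/eqP ->]; last by rewrite big_set0.
  rewrite /bdry_coef mulr_sumr; apply: eq_bigr => y _.
  by rewrite /G; case: ifP; rewrite ?mulr0.
apply: sum_antisym => x y xs ys nxy; rewrite /G.
have sDDC : s :\ y :\ x = s :\ x :\ y by rewrite setDDl setUC -setDDl.
rewrite sDDC; case: ifP => [/andP[/eqP rE _]|_]; last by rewrite addr0.
have yx : y \in s :\ x by rewrite !inE eq_sym nxy.
have xy : x \in s :\ y by rewrite !inE nxy.
rewrite /face_sign (rank_belowD1 x yx) (rank_belowD1 y xy) sDDC -rE.
by apply: signr_swap_cancel; rewrite addnC ltn_enum_rank_sum.
Qed.

Lemma bdry_mx_sqr : bdry_mx F V *m bdry_mx F V = 0.
Proof.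
apply/matrixP => i j; rewrite !mxE.
under eq_bigr do rewrite !mxE.
rewrite -(big_enum_val (fun t =>
  bdry_coef F (enum_val i) t * bdry_coef F t (enum_val j))).
exact: bdry_coef_bdry.
Qed.

End Boundary.

Section Support.

Variables (F : fieldType) (V : finType).

Definition supported (P : pred {set V}) (x : 'rV[F]_#|{set V}|) : Prop :=
  forall i, x 0 i != 0 -> P (enum_val i).

Lemma supported_mulmx (P Q : pred {set V}) (M : 'M[F]_#|{set V}|)
    (x : 'rV[F]_#|{set V}|) :
  (forall i j, M i j != 0 -> P (enum_val i) -> Q (enum_val j)) ->
  supported P x -> supported Q (x *m M).
Proof.
move=> HM Hx j; rewrite !mxE => nz.
have [i Hi] : exists i, x 0 i * M i j != 0.
  case: (pickP (fun i => x 0 i * M i j != 0)) => [i h|h]; first by exists i.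
  by move: nz; rewrite big1 ?eqxx // => i _; move: (h i) => /negbFE/eqP.
move: Hi; rewrite mulf_eq0 negb_or => /andP[xi Mij].
exact: HM Mij (Hx i xi).
Qed.

Variable e : rel V.

Definition sized_clique (S : {set V}) (n : nat) (t : {set V}) : bool :=
  [&& t \subset S, #|t| == n & is_clique e t].

Lemma sub_chainsP (S : {set V}) (k : nat) (x : 'rV[F]_#|{set V}|) :
  (x <= chains F e S k)%MS <-> supported (sized_clique S k.+1) x.
Proof.
split => [sx | Hx]; last first.
  rewrite (row_sum_delta x); apply: summx_sub => i _.
  have [->|nz] := eqVneq (x 0 i) 0; first by rewrite scale0r sub0mx.
  apply: scalemx_sub; apply: (sumsmx_sup (enum_val i)); first exact: Hx.
  by rewrite enum_valK genmxE submx_refl.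
pose d : 'rV[F]_#|{set V}| := \row_j (if simplex e S k (enum_val j) then 0 else 1).
have sK : (chains F e S k <= kermx (diag_mx d))%MS.
  apply/sumsmx_subP => s Ps; rewrite genmxE sub_kermx mul_mx_diag.
  apply/eqP/matrixP => a j; rewrite !mxE.
  have [->|nj] := eqVneq j (enum_rank s); last by rewrite andbF mul0r.
  by rewrite enum_rankK Ps mulr0.
have := submx_trans sx sK; rewrite sub_kermx mul_mx_diag => /eqP/matrixP H i nz.
move: (H 0 i); rewrite !mxE; case: ifP => // _; rewrite mulr1 => xi.
by rewrite xi eqxx in nz.
Qed.

Lemma chainsS (S1 S2 : {set V}) (k : nat) :
  S1 \subset S2 -> (chains F e S1 k <= chains F e S2 k)%MS.
Proof.
move=> sS; apply/sumsmx_subP => s /and3P[s1 c cl].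
by apply: (sumsmx_sup s) => //; apply/and3P; split => //; apply: subset_trans sS.
Qed.

Lemma is_cliqueP (t : {set V}) :
  reflect (forall x y, x \in t -> y \in t -> x != y -> e x y) (is_clique e t).
Proof.
apply: (iffP forall_inP) => [H x y xt yt nxy | H x xt].
  by move: (H x xt) => /forall_inP /(_ y yt) /implyP; apply.
by apply/forall_inP => y yt; apply/implyP; apply: H.
Qed.

Lemma bdry_mx_sized_clique (S : {set V}) (n : nat) i j :
  bdry_mx F V i j != 0 -> sized_clique S n.+1 (enum_val i) ->
  sized_clique S n (enum_val j).
Proof.
rewrite mxE; case/bdry_coef_neq0 => x xs -> /and3P[sS cs cl]; apply/and3P; split.
- exact: subset_trans (subD1set _ x) sS.
- by move: cs; rewrite (cardsD1 x) xs.
- apply/is_cliqueP => a b; rewrite !inE => /andP[_ a_s] /andP[_ b_s].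
  by move/is_cliqueP: cl; apply.
Qed.

End Support.

Section Cone.

Variables (F : fieldType) (V : finType) (u v : V).

(* The sign is that of v in v |: t, so that t occurs with coefficient 1 in
   the boundary of its cone. *)
Definition cone_coef (t r : {set V}) : F :=
  if [&& u \in t, v \notin t & r == v |: t] then face_sign F t v else 0.

Definition retract_coef (s r : {set V}) : F :=
  (s == r)%:R - \sum_(t : {set V}) cone_coef s t * bdry_coef F t r
              - \sum_(t : {set V}) bdry_coef F s t * cone_coef t r.

Lemma cone_coef_sum (s : {set V}) (g : {set V} -> F) :
  \sum_(t : {set V}) cone_coef s t * g t =
  if (u \in s) && (v \notin s) then face_sign F s v * g (v |: s) else 0.
Proof.
case: ifP => [/andP[us vs]|h].
  rewrite (bigD1 (v |: s)) //= /cone_coef us vs eqxx /= big1 ?addr0 // => t.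
  by rewrite eq_sym => /negbTE ->; rewrite mul0r.
rewrite big1 // => t _; rewrite /cone_coef; case: ifP; rewrite ?mul0r //.
by case/and3P => us vs _; rewrite us vs in h.
Qed.

Lemma retract_coef_free (s r : {set V}) :
  u \notin s -> retract_coef s r = (s == r)%:R.
Proof.
move=> us; rewrite /retract_coef cone_coef_sum (negbTE us) /= bdry_coef_sum.
rewrite big1 ?subr0 // => x xs; case: ifP => // _.
by rewrite /cone_coef !inE (negbTE us) andbF /= mulr0.
Qed.

Hypothesis nuv : u != v.

Lemma retract_coef_eq0_mem (s r : {set V}) :
  u \in s -> v \in s -> u \in r -> retract_coef s r = 0.
Proof.
move=> us vs ur.
rewrite /retract_coef cone_coef_sum us vs /= subr0 bdry_coef_sum (bigD1 v) //=.
have uD : u \in s :\ v by rewrite !inE nuv.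
have -> : s :\ v != set0 by apply/set0Pn; exists u.
rewrite big1 ?addr0; last first.
  move=> x /andP[xs nxv]; case: ifP => // _.
  by rewrite /cone_coef !inE vs /= (eq_sym v x) nxv /= andbF mulr0.
rewrite /cone_coef uD !inE eqxx /= setD1K // eq_sym.
by case: (r == s); rewrite ?mulr0 ?face_sign_sqr ?subrr.
Qed.

(* Apart from s itself, the faces of v |: s are the cones of the faces of s,
   and they enter d H and H d with opposite signs. *)
Lemma retract_coef_eq0_nmem (s r : {set V}) :
  u \in s -> v \notin s -> u \in r -> retract_coef s r = 0.
Proof.
move=> us vs ur.
rewrite /retract_coef cone_coef_sum us vs /= bdry_coef_sum bdry_coefE.
rewrite (bigD1 v) ?setU11 //= setU1K //.
rewrite (eq_bigl (fun x => x \in s)); last first.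
  move=> x /=; rewrite !inE.
  by case: (eqVneq x v) => [->|]; rewrite ?(negbTE vs) ?andbT ?andbF.
have rn : r != set0 by apply/set0Pn; exists u.
rewrite rn !andbT mulrDr.
have -> : face_sign F s v * (if r == s then face_sign F r v else 0) = (r == s)%:R.
  by case: eqP => [->|_]; rewrite ?face_sign_sqr ?mulr0.
rewrite [s == r]eq_sym opprD addrA subrr sub0r -opprD mulr_sumr -big_split /=.
rewrite big1 ?oppr0 // => x xs.
have nxv : x != v by apply: contraNneq vs => <-.
have -> : (v |: s) :\ x = v |: (s :\ x).
  by apply/setP => w; rewrite !inE; case: eqP => // ->; rewrite (negbTE nxv).
rewrite andbT; case: (eqVneq r (v |: (s :\ x))) => [rE|rnE]; last first.
  rewrite mulr0 add0r; case: ifP => // _.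
  by rewrite /cone_coef (negbTE rnE) !andbF mulr0.
have uD : u \in s :\ x by move: ur; rewrite rE !inE (negbTE nuv).
have vD : v \notin s :\ x by rewrite !inE (negbTE vs) andbF.
have -> : s :\ x != set0 by apply/set0Pn; exists u.
rewrite /cone_coef uD vD rE eqxx /= /face_sign.
rewrite (rank_belowD1 v xs) (rank_belowD1 x (setU11 v (s :\ x))) setU1K //.
by apply: signr_pair_cancel; rewrite ltn_enum_rank_sum.
Qed.

Lemma retract_coef_eq0 (s r : {set V}) : u \in r -> retract_coef s r = 0.
Proof.
move=> ur; have [us|/negbTE us] := boolP (u \in s); last first.
  by rewrite retract_coef_free ?us //; case: eqP => // sr; rewrite sr ur in us.
have [vs|vs] := boolP (v \in s).
  exact: retract_coef_eq0_mem.
exact: retract_coef_eq0_nmem.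
Qed.

Definition cone_mx : 'M[F]_#|{set V}| :=
  \matrix_(i, j) cone_coef (enum_val i) (enum_val j).

Definition retract_mx : 'M[F]_#|{set V}| :=
  1%:M - cone_mx *m bdry_mx F V - bdry_mx F V *m cone_mx.

Lemma retract_mxE i j : retract_mx i j = retract_coef (enum_val i) (enum_val j).
Proof.
rewrite /retract_mx /retract_coef !mxE (inj_eq enum_val_inj).
under eq_bigr do rewrite !mxE.
rewrite -(big_enum_val (fun t =>
  cone_coef (enum_val i) t * bdry_coef F t (enum_val j))).
under [X in _ - _ - X]eq_bigr do rewrite !mxE.
by rewrite -(big_enum_val (fun t =>
  bdry_coef F (enum_val i) t * cone_coef t (enum_val j))).
Qed.

Lemma retract_mx_bdry : retract_mx *m bdry_mx F V = bdry_mx F V *m retract_mx.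
Proof.
rewrite /retract_mx !mulmxBl !mulmxBr mul1mx mulmx1 -!mulmxA bdry_mx_sqr mulmx0.
by rewrite !mulmxA bdry_mx_sqr mul0mx !subr0.
Qed.

Lemma retract_mx_id (x : 'rV[F]_#|{set V}|) :
  supported (fun t => u \notin t) x -> x *m retract_mx = x.
Proof.
move=> Hx; rewrite -[RHS]mulmx1; apply/matrixP => a j; rewrite !mxE.
apply: eq_bigr => i _; have [->|nz] := eqVneq (x a i) 0; first by rewrite !mul0r.
rewrite retract_mxE retract_coef_free; last by apply: Hx; rewrite (ord1 a) in nz.
by rewrite !mxE (inj_eq enum_val_inj).
Qed.

Lemma retract_mx_supported (x : 'rV[F]_#|{set V}|) :
  supported (fun t => u \notin t) (x *m retract_mx).
Proof.
apply: (@supported_mulmx _ _ predT) => // i j nz _; apply/negP => uj.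
by move: nz; rewrite retract_mxE retract_coef_eq0 ?eqxx.
Qed.

End Cone.

(* The last two hypotheses say that (A + B) / B -> (A' + B') / B' is onto
   and one-to-one. *)
Lemma mxrank_quotient_eq (F : fieldType) (n m1 m2 m3 m4 : nat)
    (A : 'M[F]_(m1, n)) (A' : 'M[F]_(m2, n)) (B : 'M[F]_(m3, n)) (B' : 'M[F]_(m4, n)) :
  (A <= A')%MS -> (B <= B')%MS -> (A' <= A + B')%MS -> (A :&: B' <= B)%MS ->
  (\rank (A' + B') - \rank B')%N = (\rank (A + B) - \rank B)%N.
Proof.
move=> sAA' sBB' sA'AB' sAB'B.
have rk_sum : \rank (A' + B') = \rank (A + B').
  apply: eqmx_rank; apply/andP; split; first by rewrite addsmx_sub sA'AB' addsmxSr.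
  by apply: addsmxS.
have rk_cap : \rank (A :&: B')%MS = \rank (A :&: B)%MS.
  apply: eqmx_rank; apply/andP; split; first by rewrite sub_capmx capmxSl sAB'B.
  by apply: capmxS.
have := mxrank_sum_cap A B'; have := mxrank_sum_cap A B.
rewrite rk_sum rk_cap; lia.
Qed.

Section Domination.

Variables (F : fieldType) (V : finType) (e : rel V).
Hypothesis He_sym : symmetric e.
Variables (u v : V).
Hypothesis Hdom : dominated e u v.

Let nuv : u != v. Proof. by case: Hdom; rewrite eq_sym. Qed.

Lemma cone_mx_sized_clique (S : {set V}) (n : nat) i j :
  (u \in S -> v \in S) ->
  cone_mx F u v i j != 0 -> sized_clique e S n (enum_val i) ->
  sized_clique e S n.+1 (enum_val j).
Proof.
case: Hdom => _ sN hS; rewrite mxE /cone_coef; case: ifP; last by rewrite eqxx.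
case/and3P => ut vt /eqP -> _; set t := enum_val i => /and3P[tS ct cl].
have uS : u \in S by apply: (subsetP tS).
have vN y : y \in t -> y != v -> e v y.
  move=> yt nyv; have : y \in closed_nbhd e u.
    rewrite inE; have [//|nyu] := eqVneq y u.
    by move/is_cliqueP: cl; apply => //; rewrite eq_sym.
  by move/(subsetP sN); rewrite inE (negbTE nyv).
apply/and3P; split.
- by rewrite subUset sub1set hS.
- by rewrite cardsU1 vt (eqP ct).
- apply/is_cliqueP => a b; rewrite !inE.
  case/orP => [/eqP -> | aT]; case/orP => [/eqP -> | bt]; rewrite ?eqxx //.
  + by move=> nvb; apply: vN; rewrite // eq_sym.
  + by move=> nav; rewrite He_sym; apply: vN.
  + by move/is_cliqueP: cl; apply.
Qed.

Section Closed.

Variable S : {set V}.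
Hypothesis closedS : u \in S -> v \in S.

Lemma cone_chains (k : nat) (x : 'rV[F]_#|{set V}|) :
  (x <= chains F e S k)%MS -> (x *m cone_mx F u v <= chains F e S k.+1)%MS.
Proof.
move=> /sub_chainsP Hx; apply/sub_chainsP; apply: supported_mulmx Hx.
by move=> i j; apply: cone_mx_sized_clique.
Qed.

Lemma retract_chains (k : nat) (x : 'rV[F]_#|{set V}|) :
  (x <= chains F e S k)%MS -> (x *m retract_mx F u v <= chains F e (S :\ u) k)%MS.
Proof.
move=> /sub_chainsP xS.
have HD n := @supported_mulmx F V _ _ _ _ (@bdry_mx_sized_clique F V e S n).
have HC n := @supported_mulmx F V _ _ _ _
  (fun i j => @cone_mx_sized_clique S n i j closedS).
have /sub_chainsP RxS : (x *m retract_mx F u v <= chains F e S k)%MS.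
  rewrite /retract_mx !mulmxBr mulmx1 !mulmxA.
  apply: addmx_sub; first apply: addmx_sub; rewrite ?eqmx_opp; apply/sub_chainsP.
  - exact: xS.
  - exact/HD/HC.
  - exact/HC/HD.
have uRx := @retract_mx_supported F V u v nuv x.
apply/sub_chainsP => i nz; case/and3P: (RxS i nz) => sS c cl.
by apply/and3P; split; rewrite // subsetD1 sS uRx.
Qed.

End Closed.

Lemma cycles_sub_retract (S T : {set V}) (k : nat) :
  S \subset T -> (u \in S -> v \in S) ->
  (cycles F e S k <= cycles F e (S :\ u) k + boundaries F e T k)%MS.
Proof.
move=> sST hS; apply/row_subP => i; set z := row i _.
have : (z <= cycles F e S k)%MS by apply: row_sub.
rewrite sub_capmx sub_kermx => /andP[zC /eqP zD].
have -> : z = z *m retract_mx F u v + z *m cone_mx F u v *m bdry_mx F V.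
  by rewrite /retract_mx !mulmxBr mulmx1 !mulmxA zD mul0mx subr0 addrNK.
apply: addmx_sub_adds.
  rewrite sub_capmx retract_chains // sub_kermx.
  by rewrite -mulmxA retract_mx_bdry mulmxA zD mul0mx eqxx.
by apply/submxMr/(submx_trans _ (chainsS _ _ _ sST))/cone_chains.
Qed.

Lemma cap_boundaries_sub (S T : {set V}) (k : nat) : (u \in T -> v \in T) ->
  (cycles F e (S :\ u) k :&: boundaries F e T k <= boundaries F e (T :\ u) k)%MS.
Proof.
move=> hT; apply/row_subP => i; set w := row i _.
have : (w <= cycles F e (S :\ u) k :&: boundaries F e T k)%MS by apply: row_sub.
rewrite !sub_capmx => /andP[/andP[wC _] /submxP[c wE]].
have wf : supported (fun t => u \notin t) w.
  move/sub_chainsP: wC => H j nz; case/and3P: (H j nz).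
  by rewrite subsetD1 => /andP[].
rewrite -(retract_mx_id v wf) wE -!mulmxA -retract_mx_bdry !mulmxA.
by apply/submxMr/retract_chains/submxMl.
Qed.

Lemma persistent_rank_delete (S T : {set V}) (k : nat) :
  S \subset T -> (u \in S -> v \in S) -> (u \in T -> v \in T) ->
  (\rank (cycles F e S k + boundaries F e T k) - \rank (boundaries F e T k))%N =
  (\rank (cycles F e (S :\ u) k + boundaries F e (T :\ u) k)
     - \rank (boundaries F e (T :\ u) k))%N.
Proof.
move=> sST hS hT; apply: mxrank_quotient_eq.
- by apply/capmxS/submx_refl/chainsS/subD1set.
- by apply/submxMr/chainsS/subD1set.
- exact: cycles_sub_retract.
- exact: cap_boundaries_sub.
Qed.

End Domination.

Section Filtration.

Variables (R : numDomainType) (V : finType) (W : {set V}) (f : V -> R).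
Variables (m : nat) (a : nat -> R).
Hypothesis a_incr : forall i j : nat, (i < j <= m)%N -> a i < a j.

Lemma filt_setD1 (u : V) (l : nat) : filt (W :\ u) f m a l = filt W f m a l :\ u.
Proof. by apply/setP => w; rewrite !inE andbA. Qed.

Lemma filt_subset (i j : nat) :
  (i <= j <= m)%N -> filt W f m a i \subset filt W f m a j.
Proof.
case/andP => ij jm; apply/subsetP => w; rewrite !inE => /andP[-> /= h].
apply: le_trans h; have [-> //|nij] := eqVneq i j.
by apply/ltW/a_incr; apply/andP; split; lia.
Qed.

Lemma filt_closed (u v : V) (l : nat) : (u \in W -> v \in W) -> f u <= f v ->
  u \in filt W f m a l -> v \in filt W f m a l.
Proof. by move=> hW fuv; rewrite !inE => /andP[/hW -> /le_trans]; apply. Qed.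

Lemma PD_delete_dominated (F : fieldType) (e : rel V) (u v : V) (k : nat) :
  symmetric e -> dominated e u v -> (u \in W -> v \in W) -> f u <= f v ->
  PD F e W f m a k = PD F e (W :\ u) f m a k.
Proof.
move=> e_sym dom hW fuv.
have pbettiE : pbetti F e W f m a k = pbetti F e (W :\ u) f m a k.
  apply: functional_extensionality => i; apply: functional_extensionality => j.
  rewrite /pbetti; case: ifP => // ij; rewrite !filt_setD1.
  apply: (persistent_rank_delete F e_sym dom);
    [exact: filt_subset | exact: filt_closed hW fuv ..].
by rewrite /PD pbettiE.
Qed.

End Filtration.

Lemma degree_dominated_le (R : numDomainType) (V : finType) (e : rel V) (u v : V) :
  irreflexive e -> dominated e u v -> degree_fun R e u <= degree_fun R e v.
Proof.
move=> e_irr [_ sN].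
have card_nbhd w : #|closed_nbhd e w| = (#|[set x | e w x]|).+1.
  have -> : closed_nbhd e w = w |: [set x | e w x] by apply/setP => x; rewrite !inE.
  by rewrite cardsU1 inE e_irr.
by rewrite /degree_fun ler_nat -ltnS -!card_nbhd subset_leq_card.
Qed.

Theorem mainTheorem5 (F : fieldType) (R : realFieldType) (V : finType)
  (e : rel V) (He_sym : symmetric e) (He_irr : irreflexive e) :
  (forall (f : V -> R) (m : nat) (a : nat -> R),
     (forall i j : nat, (i < j <= m)%N -> a i < a j) ->
     (forall w : V, a 0%N <= f w <= a m) ->
     forall u v : V, dominated e u v -> f u <= f v ->
     forall k : nat,
       PD F e [set: V] f m a k = PD F e ([set: V] :\ u) f m a k)
  /\
  (forall (m : nat) (a : nat -> R),
     (forall i j : nat, (i < j <= m)%N -> a i < a j) ->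
     (forall w : V, a 0%N <= degree_fun R e w <= a m) ->
     forall u v : V, dominated e u v ->
     forall k : nat,
       PD F e [set: V] (degree_fun R e) m a k
       = PD F e ([set: V] :\ u) (degree_fun R e) m a k).
Proof.
split=> [f m a a_incr _ u v dom fuv k | m a a_incr _ u v dom k].
  exact: (PD_delete_dominated a_incr F k He_sym dom).
apply: (PD_delete_dominated a_incr F k He_sym dom) => //.
exact: degree_dominated_le.
Qed.
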